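(* Let $M$ be a multigraph with $n$ vertices. Then $M$ is the double competition multigraph of a loopless digraph if and only if there exist an ordering $(v_1,\ldots,v_n)$ of the vertices of $M$ and a double indexed edge clique partition $\{S_{ij}\mid i,j\in[n]\}$ of $M$ such that the following conditions hold: (I) for any $i,j\in[n]$, if $|A_i\cap B_j|\ge 2$, then $A_i\cap B_j=S_{ij}$; (II) for any $i,j\in[n]$, $v_i\notin S_{ij}$ and $v_j\notin S_{ij}$, where $A_i = S_{i*}\cup T^+_i$, $S_{i*} := \bigcup_{p\in[n]} S_{ip}$, $T^+_i := \{v_b \mid a,b\in[n],\ v_i\in S_{ab}\}$, and $B_j = S_{*j}\cup T^-_j$, $S_{*j} := \bigcup_{q\in[n]} S_{qj}$, $T^-_j := \{v_a \mid a,b\in[n],\ v_j\in S_{ab}\}$.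
   Context: A digraph $D$ is a pair $(V(D),A(D))$ with $A(D)$ a set of ordered pairs of vertices (arcs); an arc $(v,v)$ is a loop, and $D$ is loopless if it has no loops. $N^+_D(x)=\{v\mid (x,v)\in A(D)\}$ and $N^-_D(x)=\{v\mid (v,x)\in A(D)\}$. A multigraph $M$ (without loops) is a vertex set $V(M)$ together with a function $m_M$ assigning to each unordered pair $\{x,y\}$ of distinct vertices a nonnegative integer, the number of edges between $x$ and $y$. The double competition multigraph of a digraph $D$ is the multigraph $M$ with $V(M)=V(D)$ and $m_M(\{x,y\}) = |N^+_D(x)\cap N^+_D(y)|\cdot|N^-_D(x)\cap N^-_D(y)|$ for distinct $x,y$. A clique of $M$ is a set of vertices that are pairwise adjacent (i.e. $m_M\ge 1$ on every pair of distinct elements); the empty set and singletons count as cliques. An edge clique partition of $M$ is a family (multiset) $\mathcal{F}$ of cliques of $M$ such that any two distinct vertices $x,y$ are contained in exactly $m_M(\{x,y\})$ members of $\mathcal{F}$; a double indexed edge clique partition $\{S_{ij}\mid i,j\in[n]\}$ is such a family indexed by pairs $(i,j)\in[n]\times[n]$ (members may be empty). $[n]=\{1,\ldots,n\}$. *)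

From mathcomp Require Import all_boot.
Set Implicit Arguments. Unset Strict Implicit. Unset Printing Implicit Defensive.

(* A multigraph on the finite vertex type V: a function on unordered pairs,
   represented as 2-element sets [set x; y] (values on other sets are ignored). *)
Definition multigraph (V : finType) := {set V} -> nat.

Definition digraph (V : finType) := rel V.

Definition loopless (V : finType) (D : digraph V) : Prop := forall x, ~~ D x x.

Definition outN (V : finType) (D : digraph V) (x : V) : {set V} := [set v | D x v].
Definition inN  (V : finType) (D : digraph V) (x : V) : {set V} := [set v | D v x].

Definition is_dcm (V : finType) (D : digraph V) (M : multigraph V) : Prop :=
  forall x y : V, x != y ->
    M [set x; y] = #|outN D x :&: outN D y| * #|inN D x :&: inN D y|.

Definition is_clique (V : finType) (M : multigraph V) (C : {set V}) : Prop :=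
  forall x y, x \in C -> y \in C -> x != y -> 1 <= M [set x; y].

Definition dieCP (V : finType) (n : nat) (M : multigraph V)
    (S : 'I_n -> 'I_n -> {set V}) : Prop :=
  (forall i j, is_clique M (S i j)) /\
  (forall x y : V, x != y ->
     #|[set p : 'I_n * 'I_n | (x \in S p.1 p.2) && (y \in S p.1 p.2)]| = M [set x; y]).

Section AB.
Variables (V : finType) (n : nat) (v : 'I_n -> V) (S : 'I_n -> 'I_n -> {set V}).

Definition Srow (i : 'I_n) : {set V} := \bigcup_(p < n) S i p.
Definition Scol (j : 'I_n) : {set V} := \bigcup_(q < n) S q j.
Definition Tplus (i : 'I_n) : {set V} :=
  [set v b | b : 'I_n & [exists a : 'I_n, v i \in S a b]].
Definition Tminus (j : 'I_n) : {set V} :=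
  [set v a | a : 'I_n & [exists b : 'I_n, v j \in S a b]].
Definition Aset (i : 'I_n) : {set V} := Srow i :|: Tplus i.
Definition Bset (j : 'I_n) : {set V} := Scol j :|: Tminus j.
End AB.

From mathcomp Require Import all_boot.

(* For a digraph D and an ordering v of its vertices, the clique S_ij consists of
   the common in-neighbours of v_i and out-neighbours of v_j; then A_i and B_j are
   contained in the in-neighbourhood of v_i and the out-neighbourhood of v_j, so
   A_i and B_j meet exactly in S_ij, and the pairs (i, j) with x, y in S_ij are
   the pairs of a common out-neighbour v_i and a common in-neighbour v_j of x and y.
   Conversely, given the partition, let x -> y whenever x lies in A_i for v_i = y.
   Condition (I) says that x, y lie in a common S_ij iff they lie in a common A_i
   and a common B_j; since v_a lies in A_b iff v_b lies in B_a, the common out- and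
   in-neighbours of x and y correspond to these i and j, and (II) rules out loops. *)

Set Implicit Arguments.
Unset Strict Implicit.
Unset Printing Implicit Defensive.

Lemma card_preimset_bij (aT rT : finType) (f : aT -> rT) (A : {set rT}) :
  bijective f -> #|[set x | f x \in A]| = #|A|.
Proof.
by move=> bf; rewrite -(on_card_preimset (onW_bij _ bf)); apply: eq_card => x; rewrite !inE.
Qed.

Lemma card_pairs_prod (I J : finType) (R : I -> J -> bool) (P : pred I) (Q : pred J) :
  (forall i j, R i j = P i && Q j) ->
  #|[set p : I * J | R p.1 p.2]| = #|[set i | P i]| * #|[set j | Q j]|.
Proof. by move=> RPQ; rewrite -cardsX; apply: eq_card => -[i j]; rewrite !inE RPQ. Qed.

Section RowColumnSets.

Variables (V : finType) (n : nat) (v : 'I_n -> V) (S : 'I_n -> 'I_n -> {set V}).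
Local Notation A := (Aset v S).
Local Notation B := (Bset v S).

Lemma S_subset_AsetI_Bset i j : S i j \subset A i :&: B j.
Proof.
apply/subsetP => z zS; rewrite !inE /Srow /Scol.
by apply/andP; split; apply/orP; left; apply/bigcupP; [exists j | exists i].
Qed.

Lemma mem_Aset_Bset a b : injective v -> (v a \in A b) = (v b \in B a).
Proof.
move=> vinj; rewrite /Aset /Bset /Srow /Scol /Tplus /Tminus !inE.
apply/orP/orP => [[/bigcupP [p _ vaS] | /imsetP [c]] | [/bigcupP [q _ vbS] | /imsetP [c]]].
- by right; apply/imsetP; exists b; rewrite // inE; apply/existsP; exists p.
- by rewrite inE => /existsP [a' vbS] /vinj ->; left; apply/bigcupP; exists a'.
- by right; apply/imsetP; exists a; rewrite // inE; apply/existsP; exists q.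
- by rewrite inE => /existsP [b' vaS] /vinj ->; left; apply/bigcupP; exists b'.
Qed.

Lemma mem2_S_AsetI_Bset i j x y :
  (2 <= #|A i :&: B j| -> A i :&: B j = S i j) -> x != y ->
  (x \in S i j) && (y \in S i j) =
  ((x \in A i) && (y \in A i)) && ((x \in B j) && (y \in B j)).
Proof.
move=> HI xy; apply/andP/andP => [[xS yS] | [/andP [xA yA] /andP [xB yB]]].
  have /subsetP sub := S_subset_AsetI_Bset i j.
  by move: (sub x xS) (sub y yS); rewrite !inE => /andP [-> ->] /andP [-> ->].
have xyAB : [set x; y] \subset A i :&: B j.
  by apply/subsetP => z /set2P [] ->; rewrite inE ?xA ?xB ?yA ?yB.
have -> : S i j = A i :&: B j.
  by rewrite HI // (leq_trans _ (subset_leq_card xyAB)) // cards2 xy.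
by move/subsetP: xyAB => sub; rewrite !sub ?set21 ?set22.
Qed.

End RowColumnSets.

Section FromDigraph.

Variables (V : finType) (D : digraph V) (n : nat) (v : 'I_n -> V).

Definition digraph_ecp (i j : 'I_n) : {set V} := inN D (v i) :&: outN D (v j).
Local Notation S := digraph_ecp.

Lemma Aset_digraph_ecp_sub i : Aset v S i \subset inN D (v i).
Proof.
apply/subsetP => z; rewrite /Aset /Srow /Tplus !inE.
case/orP => [/bigcupP [p _] | /imsetP [b]]; rewrite !inE; first by case/andP.
by case/existsP => a; rewrite !inE => /andP [_ Dvbvi] ->.
Qed.

Lemma Bset_digraph_ecp_sub j : Bset v S j \subset outN D (v j).
Proof.
apply/subsetP => z; rewrite /Bset /Scol /Tminus !inE.
case/orP => [/bigcupP [q _] | /imsetP [a]]; rewrite !inE; first by case/andP.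
by case/existsP => b; rewrite !inE => /andP [Dvjva _] ->.
Qed.

Lemma AsetI_Bset_digraph_ecp i j : Aset v S i :&: Bset v S j = S i j.
Proof.
apply/eqP; rewrite eqEsubset S_subset_AsetI_Bset andbT.
exact: setISS (Aset_digraph_ecp_sub i) (Bset_digraph_ecp_sub j).
Qed.

Lemma digraph_ecp_notin_ends i j :
  loopless D -> v i \notin S i j /\ v j \notin S i j.
Proof. by move=> lD; rewrite !inE (negbTE (lD (v i))) (negbTE (lD (v j))) andbF. Qed.

Variable M : multigraph V.
Hypothesis dcmD : is_dcm D M.

Lemma digraph_ecp_clique i j : is_clique M (S i j).
Proof.
move=> x y; rewrite !inE => /andP [xvi vjx] /andP [yvi vjy] xy.
rewrite dcmD // muln_gt0 !card_gt0; apply/andP; split; apply/set0Pn.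
  by exists (v i); rewrite !inE xvi yvi.
by exists (v j); rewrite !inE vjx vjy.
Qed.

Lemma dieCP_digraph_ecp : bijective v -> dieCP M S.
Proof.
move=> bv; split=> [|x y xy]; first exact: digraph_ecp_clique.
rewrite dcmD // (@card_pairs_prod _ _ (fun i j => (x \in S i j) && (y \in S i j))
                   (fun i => v i \in outN D x :&: outN D y)
                   (fun j => v j \in inN D x :&: inN D y)).
  by rewrite !card_preimset_bij.
by move=> i j; rewrite !inE -!andbA; do !bool_congr.
Qed.

End FromDigraph.

Section FromPartition.

Variables (V : finType) (n : nat) (v : 'I_n -> V) (w : V -> 'I_n).
Hypotheses (vK : cancel v w) (wK : cancel w v).
Variable S : 'I_n -> 'I_n -> {set V}.
Local Notation A := (Aset v S).
Local Notation B := (Bset v S).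

Definition ecp_digraph : digraph V := fun x y => x \in A (w y).
Local Notation D := ecp_digraph.

Lemma ecp_digraph_loopless :
  (forall i j, v i \notin S i j /\ v j \notin S i j) -> loopless D.
Proof.
move=> HII x; rewrite /D -{1}(wK x) /Aset /Srow /Tplus !inE negb_or.
apply/andP; split.
  by apply/bigcupP => -[p _]; apply/negP; case: (HII (w x) p).
apply/imsetP => -[b]; rewrite inE => /existsP [a vxS] /(can_inj vK) eq_xb.
by move: vxS; rewrite eq_xb; apply/negP; case: (HII a b).
Qed.

Lemma card_outNI_ecp_digraph x y :
  #|outN D x :&: outN D y| = #|[set i | (x \in A i) && (y \in A i)]|.
Proof.
rewrite -[RHS](card_preimset_bij _ (Bijective wK vK)).
by apply: eq_card => z; rewrite /D !inE.
Qed.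

Lemma card_inNI_ecp_digraph x y :
  #|inN D x :&: inN D y| = #|[set j | (x \in B j) && (y \in B j)]|.
Proof.
rewrite -[LHS](card_preimset_bij _ (Bijective vK wK)).
apply: eq_card => j.
have memB z : (z \in B j) = D (v j) z.
  by rewrite /D mem_Aset_Bset ?wK //; apply: can_inj vK.
by rewrite [in RHS]inE !memB inE in_setI /inN !in_set.
Qed.

Lemma ecp_digraph_dcm M :
  dieCP M S ->
  (forall i j, 2 <= #|A i :&: B j| -> A i :&: B j = S i j) ->
  is_dcm D M.
Proof.
move=> [_ countS] HI x y xy.
rewrite -countS // card_outNI_ecp_digraph card_inNI_ecp_digraph.
apply: (@card_pairs_prod _ _ (fun i j => (x \in S i j) && (y \in S i j))) => i j.
exact: mem2_S_AsetI_Bset (HI i j) xy.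
Qed.

End FromPartition.

Theorem theorem2 (V : finType) (n : nat) (hn : #|V| = n) (M : multigraph V) :
  (exists D : digraph V, loopless D /\ is_dcm D M) <->
  (exists v : 'I_n -> V, bijective v /\
     exists S : 'I_n -> 'I_n -> {set V},
       dieCP M S /\
       (forall i j : 'I_n, 2 <= #|Aset v S i :&: Bset v S j| ->
          Aset v S i :&: Bset v S j = S i j) /\
       (forall i j : 'I_n, v i \notin S i j /\ v j \notin S i j)).
Proof.
split=> [[D [lD dcmD]] | [v [[w vK wK] [S [ecpS [HI HII]]]]]].
- subst n; exists enum_val; split; first exact: enum_val_bij.
  exists (digraph_ecp D enum_val); split; first exact: dieCP_digraph_ecp (enum_val_bij V).
  by split=> i j; [rewrite AsetI_Bset_digraph_ecp | apply: digraph_ecp_notin_ends].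
- exists (ecp_digraph v w S); split; first exact: ecp_digraph_loopless.
  exact: ecp_digraph_dcm.
Qed.
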